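(* Let $L$ be a localization functor on abelian groups. The following are equivalent: (1) $\mathrm{support}\, L=\omega_0$; (2) the homomorphism $\bigoplus_{\omega_0}a_{\mathbb{Z}}:F_{\omega_0}\to\bigoplus_{\omega_0}L\mathbb{Z}$ is an $L$-localization, i.e. $LF_{\omega_0}=\bigoplus_{\omega_0}L\mathbb{Z}$; (3) for every cardinal $\kappa$, $LF_\kappa=\bigoplus_\kappa L\mathbb{Z}$ (via $\bigoplus_\kappa a_{\mathbb{Z}}$).
   Context: All groups are abelian. A localization is a functor $L:\mathcal{Ab}\to\mathcal{Ab}$ with a natural transformation $a:\mathrm{Id}\to L$ such that $a_{LX}=La_X$ and $a_{LX}$ is an isomorphism for all $X$; $X$ is $L$-local if $a_X$ is an isomorphism. For a cardinal $\kappa$ let $F_\kappa=\bigoplus_\kappa\mathbb{Z}$ (with a chosen basis indexed by $\kappa$), and let $g:LF_\kappa\to\prod_\kappa L\mathbb{Z}$ be the unique homomorphism with $g\circ a_{F_\kappa}$ equal to $F_\kappa\xrightarrow{\bigoplus_\kappa a_{\mathbb{Z}}}\bigoplus_\kappa L\mathbb{Z}\subseteq\prod_\kappa L\mathbb{Z}$ (it exists since products of $L$-local groups are $L$-local). Let $N^\kappa_L$ be the image of $g$. $\mathrm{support}_\kappa L$ is the least cardinal strictly greater than the cardinalities of the supports of all elements of $N^\kappa_L\subseteq\prod_\kappa L\mathbb{Z}$. $\mathrm{support}\, L$ is the supremum of $\mathrm{support}_\kappa L$ over all cardinals $\kappa$ (or $\infty$ if unbounded). *)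

(* We avoid MathComp's zmodType because it requires a
   choiceType structure, which the (arbitrary, infinite) groups here,
   e.g. direct sums over an arbitrary index type, do not carry
   constructively. *)
From Stdlib Require Import ZArith List Classical FunctionalExtensionality ProofIrrelevance.
Set Implicit Arguments.

Record AbGroup : Type := {
  carrier :> Type;
  zero : carrier;
  add : carrier -> carrier -> carrier;
  opp : carrier -> carrier;
  addA : forall x y z, add x (add y z) = add (add x y) z;
  addC : forall x y, add x y = add y x;
  add0 : forall x, add zero x = x;
  addN : forall x, add (opp x) x = zero
}.
Arguments zero {_}.
Arguments add {_} _ _.
Arguments opp {_} _.
Arguments addA {_} _ _ _.
Arguments addC {_} _ _.
Arguments add0 {_} _.
Arguments addN {_} _.

Record hom (X Y : AbGroup) : Type := {
  hfun :> X -> Y;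
  hadd : forall x y, hfun (add x y) = add (hfun x) (hfun y)
}.

Lemma hom0 (X Y : AbGroup) (f : hom X Y) : f zero = zero.
Proof.
  assert (H : add (f zero) (f zero) = f zero).
  { rewrite <- hadd, add0; reflexivity. }
  transitivity (add (add (opp (f zero)) (f zero)) (f zero)).
  - rewrite addN, add0; reflexivity.
  - rewrite <- addA, H; apply addN.
Qed.

Definition is_iso (X Y : AbGroup) (f : hom X Y) : Prop :=
  exists g : Y -> X, (forall x, g (f x) = x) /\ (forall y, f (g y) = y).

Definition Zgrp : AbGroup :=
  {| carrier := Z; zero := 0%Z; add := Z.add; opp := Z.opp;
     addA := Z.add_assoc; addC := Z.add_comm; add0 := Z.add_0_l;
     addN := Z.add_opp_diag_l |}.

Definition Prod (K : Type) (G : AbGroup) : AbGroup.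
Proof.
  refine {| carrier := K -> G; zero := fun _ => zero;
            add := fun f g k => add (f k) (g k);
            opp := fun f k => opp (f k) |}.
  - intros; apply functional_extensionality; intro; apply addA.
  - intros; apply functional_extensionality; intro; apply addC.
  - intros; apply functional_extensionality; intro; apply add0.
  - intros; apply functional_extensionality; intro; apply addN.
Defined.

Definition fin_supp (K : Type) (G : AbGroup) (f : K -> G) : Prop :=
  exists s : list K, forall k, f k <> zero -> In k s.

Arguments fin_supp {K G} f.

Lemma oppN0 (G : AbGroup) (x : G) : opp x <> zero -> x <> zero.
Proof.
  intros H Hx; apply H; subst.
  rewrite <- (addN zero) at 2. rewrite addC, add0. reflexivity.
Qed.

Lemma fin_supp_add (K : Type) (G : AbGroup) (f g : K -> G) :
  fin_supp f -> fin_supp g -> fin_supp (fun k => add (f k) (g k)).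
Proof.
  intros [s Hs] [t Ht]; exists (s ++ t); intros k Hk; apply in_or_app.
  destruct (classic (f k = zero)) as [E|E].
  - right; apply Ht; rewrite E, add0 in Hk; exact Hk.
  - left; apply Hs; exact E.
Qed.

Lemma fin_supp_opp (K : Type) (G : AbGroup) (f : K -> G) : fin_supp f -> fin_supp (fun k => opp (f k)).
Proof.
  intros [s Hs]; exists s; intros k Hk; apply Hs; apply oppN0; exact Hk.
Qed.

Lemma fin_supp0 (K : Type) (G : AbGroup) : @fin_supp K G (fun _ => zero).
Proof. exists nil; intros k H; exfalso; apply H; reflexivity. Qed.

Lemma sig_eq_pi {A} (P : A -> Prop) (x y : {a | P a}) :
  proj1_sig x = proj1_sig y -> x = y.
Proof.
  destruct x, y; simpl; intros ->; f_equal; apply proof_irrelevance.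
Qed.

Definition DSum (K : Type) (G : AbGroup) : AbGroup.
Proof.
  refine {| carrier := {f : K -> G | fin_supp f};
            zero := exist _ (fun _ => zero) (@fin_supp0 K G);
            add := fun f g => exist _ _ (fin_supp_add (proj2_sig f) (proj2_sig g));
            opp := fun f => exist _ _ (fin_supp_opp (proj2_sig f)) |}.
  - intros; apply sig_eq_pi; simpl; apply functional_extensionality; intro; apply addA.
  - intros; apply sig_eq_pi; simpl; apply functional_extensionality; intro; apply addC.
  - intros; apply sig_eq_pi; simpl; apply functional_extensionality; intro; apply add0.
  - intros; apply sig_eq_pi; simpl; apply functional_extensionality; intro; apply addN.
Defined.

Definition F (K : Type) : AbGroup := DSum K Zgrp.

Lemma fin_supp_map K (X Y : AbGroup) (f : hom X Y) (u : K -> X) :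
  fin_supp u -> fin_supp (fun k => f (u k)).
Proof.
  intros [s Hs]; exists s; intros k Hk; apply Hs; intro E; apply Hk;
  rewrite E; apply hom0.
Qed.

Definition dsum_map (K : Type) (X Y : AbGroup) (f : hom X Y) : hom (DSum K X) (DSum K Y).
Proof.
  refine {| hfun := fun u : DSum K X => (exist _ _ (fin_supp_map f (proj2_sig u)) : DSum K Y) |}.
  intros; apply sig_eq_pi; simpl; apply functional_extensionality; intro; apply hadd.
Defined.

Definition incl (K : Type) (G : AbGroup) : hom (DSum K G) (Prod K G).
Proof.
  refine {| hfun := fun u : DSum K G => (proj1_sig u : Prod K G) |}. intros; reflexivity.
Defined.

Record Localization : Type := {
  Lob :> AbGroup -> AbGroup;
  Lmap : forall X Y : AbGroup, hom X Y -> hom (Lob X) (Lob Y);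
  Lmap_id : forall (X : AbGroup) (f : hom X X),
      (forall x, f x = x) -> forall y, Lmap f y = y;
  Lmap_comp : forall (X Y Z : AbGroup) (f : hom X Y) (g : hom Y Z) (h : hom X Z),
      (forall x, h x = g (f x)) -> forall y, Lmap h y = Lmap g (Lmap f y);
  La : forall X : AbGroup, hom X (Lob X);
  La_nat : forall (X Y : AbGroup) (f : hom X Y) (x : X),
      Lmap f (La X x) = La Y (f x);
  La_LX : forall (X : AbGroup) (y : Lob X), La (Lob X) y = Lmap (La X) y;
  La_LX_iso : forall X : AbGroup, is_iso (La (Lob X))
}.

Definition is_L_localization (L : Localization) (X Y : AbGroup) (f : hom X Y) : Prop :=
  exists phi : hom (L X) Y, is_iso phi /\ forall x, phi (La L X x) = f x.

(* N^K_L : the image of the (unique) homomorphism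
   g : L F_K -> prod_K L Z  with  g o a_{F_K} = incl o (+)_K a_Z. *)
Definition N_L (L : Localization) (K : Type) (y : Prod K (L Zgrp)) : Prop :=
  exists g : hom (L (F K)) (Prod K (L Zgrp)),
    (forall x, g (La L (F K) x) = incl K (L Zgrp) (dsum_map K (La L Zgrp) x)) /\
    exists x, g x = y.

Definition supp_at_least (K : Type) (G : AbGroup) (y : K -> G) (n : nat) : Prop :=
  exists s : list K, NoDup s /\ length s = n /\ forall k, In k s -> y k <> zero.

(* support L = omega_0.
   support_K L = least cardinal > |supp y| for all y in N^K_L, and
   support L = sup_K support_K L.  Hence  support L = omega_0  iff
   (i) every support_K L <= omega_0, i.e. every y in every N^K_L has
       finite support, and
   (ii) the support_K L are not bounded by a finite cardinal, i.e. for every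
       n there are K and y in N^K_L with |supp y| >= n. *)
Definition support_is_omega0 (L : Localization) : Prop :=
  (forall (K : Type) (y : Prod K (L Zgrp)), @N_L L K y -> @fin_supp K (L Zgrp) y) /\
  (forall n : nat, exists (K : Type) (y : Prod K (L Zgrp)),
      @N_L L K y /\ @supp_at_least K (L Zgrp) y n).

(* If every element of N^K_L has finite support, the lift L F_K -> prod_K LZ
   of the inclusion corestricts to phi : L F_K -> (+)_K LZ, and the sum of the
   maps L(e_k) : LZ -> L F_K over the support inverts phi; so (+)_K a_Z is an
   L-localization.  Conversely, when (+)_K a_Z is a localization, N^K_L is
   exactly (+)_K LZ.  An element of N^K_L with infinite support restricts, along
   an injection nat -> K into its support, to an element of N^omega0_L with
   infinite support; hence localization at omega0 forces finite supports at
   every K.  Finally (+)_omega0 LZ has elements of every finite support size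
   as soon as LZ <> 0. *)
From Pilot Require Import Defs.
From Stdlib Require Import Arith List Classical ClassicalEpsilon FunctionalExtensionality Lia Permutation.
Import ListNotations.
Set Implicit Arguments.

Lemma add_0_r (G : AbGroup) (x : G) : add x zero = x.
Proof. rewrite addC; apply add0. Qed.

Lemma add_add_add_comm (G : AbGroup) (a b c d : G) :
  add (add a b) (add c d) = add (add a c) (add b d).
Proof. rewrite <- !addA. f_equal. rewrite !addA. f_equal. apply addC. Qed.

Lemma add_left_comm (G : AbGroup) (a b c : G) : add a (add b c) = add b (add a c).
Proof. rewrite !addA. f_equal. apply addC. Qed.

Definition hcomp {X Y Z : AbGroup} (g : hom Y Z) (f : hom X Y) : hom X Z.
Proof. refine {| hfun := fun x => g (f x) |}. intros; rewrite !hadd; reflexivity. Defined.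

Definition hid (X : AbGroup) : hom X X := {| hfun := fun x => x; hadd := fun _ _ => eq_refl |}.

Lemma is_iso_inj (X Y : AbGroup) (f : hom X Y) : is_iso f -> forall x x', f x = f x' -> x = x'.
Proof. intros [g [H1 _]] x x' E. rewrite <- (H1 x), <- (H1 x'), E; reflexivity. Qed.

Definition inv_fun (X Y : AbGroup) (f : hom X Y) (H : is_iso f) : Y -> X :=
  proj1_sig (constructive_indefinite_description _ H).

Lemma inv_fun_spec (X Y : AbGroup) (f : hom X Y) (H : is_iso f) :
  (forall x, inv_fun H (f x) = x) /\ (forall y, f (inv_fun H y) = y).
Proof. unfold inv_fun. destruct (constructive_indefinite_description _ H); simpl; auto. Qed.

Definition inv_hom (X Y : AbGroup) (f : hom X Y) (H : is_iso f) : hom Y X.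
Proof.
  refine {| hfun := inv_fun H |}.
  intros y1 y2. apply (is_iso_inj H). rewrite hadd, !(proj2 (inv_fun_spec H)). reflexivity.
Defined.

Definition is_local (L : Localization) (Y : AbGroup) : Prop := is_iso (La L Y).

Lemma Lmap_ext (L : Localization) (X Y : AbGroup) (f1 f2 : hom X Y) :
  (forall x, f1 x = f2 x) -> forall y, Lmap L f1 y = Lmap L f2 y.
Proof.
  intros H y. rewrite (@Lmap_comp L _ _ _ f2 (hid Y) f1).
  - apply Lmap_id; reflexivity.
  - intro; apply H.
Qed.

(* Naturality of a turns [a_Y (f w)] into [L f (a_{LX} w)], and a_{LX} = L a_X. *)
Lemma local_hom_ext (L : Localization) (X Y : AbGroup) (HY : is_local L Y) (f1 f2 : hom (L X) Y) :
  (forall x, f1 (La L X x) = f2 (La L X x)) -> forall w, f1 w = f2 w.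
Proof.
  intros H w. apply (is_iso_inj HY).
  rewrite <- !La_nat, La_LX.
  rewrite <- (@Lmap_comp L _ _ _ (La L X) f1 (hcomp f1 (La L X))) by reflexivity.
  rewrite <- (@Lmap_comp L _ _ _ (La L X) f2 (hcomp f2 (La L X))) by reflexivity.
  apply Lmap_ext. exact H.
Qed.

Definition lift (L : Localization) (X Y : AbGroup) (HY : is_local L Y) (f : hom X Y) : hom (L X) Y :=
  hcomp (inv_hom HY) (Lmap L f).

Lemma lift_La (L : Localization) (X Y : AbGroup) (HY : is_local L Y) (f : hom X Y) x :
  lift HY f (La L X x) = f x.
Proof. unfold lift; simpl. rewrite La_nat. apply (proj1 (inv_fun_spec HY)). Qed.

Definition proj (K : Type) (G : AbGroup) (k : K) : hom (Prod K G) G :=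
  {| hfun := fun (p : Prod K G) => p k; hadd := fun _ _ => eq_refl |}.

Definition Prod_lift_proj (L : Localization) (K : Type) (G : AbGroup) (HG : is_local L G) :
  hom (L (Prod K G)) (Prod K G).
Proof.
  refine {| hfun := fun w => (fun k => lift HG (proj G k) w) : Prod K G |}.
  intros; apply functional_extensionality; intro; apply hadd.
Defined.

Lemma is_local_Prod (L : Localization) (K : Type) (G : AbGroup) (HG : is_local L G) :
  is_local L (Prod K G).
Proof.
  exists (Prod_lift_proj K HG). split.
  - intro p. apply functional_extensionality; intro k. apply (lift_La HG (proj G k)).
  - apply (@local_hom_ext L (Prod K G) _ (La_LX_iso L _) (hcomp (La L _) (Prod_lift_proj K HG)) (hid _)).
    intro p. simpl. f_equal. apply functional_extensionality; intro k. apply (lift_La HG (proj G k)).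
Qed.

Lemma is_local_Prod_LZ (L : Localization) (K : Type) : is_local L (Prod K (L Zgrp)).
Proof. apply is_local_Prod, La_LX_iso. Qed.

Definition dec (K : Type) (x y : K) : {x = y} + {x <> y} := excluded_middle_informative (x = y).

Definition evec (K : Type) (G : AbGroup) (k : K) : hom G (DSum K G).
Proof.
  refine {| hfun := fun y => (exist _ (fun j => if dec j k then y else zero) _ : DSum K G) |}.
  - intros y1 y2. apply sig_eq_pi; simpl. apply functional_extensionality; intro j.
    destruct (dec j k); [reflexivity | symmetry; apply add0].
  Unshelve. exists [k]. intros j H. destruct (dec j k); [left; auto | contradiction].
Defined.

Definition covers (K : Type) (G : AbGroup) (l : list K) (u : K -> G) : Prop :=
  forall k, u k <> zero -> In k l.
Arguments covers {K G} l u.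

Definition lsum (K : Type) (G M : AbGroup) (c : K -> hom G M) (l : list K) (u : K -> G) : M :=
  fold_right (fun k acc => add (c k (u k)) acc) zero l.

Lemma lsum_add K G M (c : K -> hom G M) l (u v : K -> G) :
  lsum c l (fun k => add (u k) (v k)) = add (lsum c l u) (lsum c l v).
Proof.
  induction l as [|k l IH]; simpl.
  - symmetry; apply add0.
  - rewrite IH, hadd. apply add_add_add_comm.
Qed.

Lemma lsum_hom K G M N (c : K -> hom G M) (f : hom M N) l (u : K -> G) :
  f (lsum c l u) = lsum (fun k => hcomp f (c k)) l u.
Proof.
  induction l as [|k l IH]; simpl.
  - apply hom0.
  - rewrite hadd, IH; reflexivity.
Qed.

Lemma lsum_ext K G G' M (c : K -> hom G M) (c' : K -> hom G' M) l (u : K -> G) (u' : K -> G') :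
  (forall k, c k (u k) = c' k (u' k)) -> lsum c l u = lsum c' l u'.
Proof. intro H; induction l as [|k l IH]; simpl; auto. rewrite IH, H; reflexivity. Qed.

Definition nonzerob (K : Type) (G : AbGroup) (u : K -> G) (k : K) : bool :=
  if excluded_middle_informative (u k = zero) then false else true.
Arguments nonzerob {K G} u k.

Lemma lsum_filter_nonzero K G M (c : K -> hom G M) l (u : K -> G) :
  lsum c l u = lsum c (filter (nonzerob u) l) u.
Proof.
  induction l as [|k l IH]; simpl; auto.
  unfold nonzerob at 1. destruct (excluded_middle_informative (u k = zero)) as [E|E]; simpl.
  - rewrite E, hom0, add0. exact IH.
  - rewrite IH; reflexivity.
Qed.

Lemma lsum_perm K G M (c : K -> hom G M) l1 l2 (u : K -> G) :
  Permutation l1 l2 -> lsum c l1 u = lsum c l2 u.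
Proof.
  induction 1; simpl; auto.
  - rewrite IHPermutation; reflexivity.
  - apply add_left_comm.
  - congruence.
Qed.

(* Both sums equal the sum over the support, listed in two orders. *)
Lemma lsum_covers K G M (c : K -> hom G M) l1 l2 (u : K -> G) :
  NoDup l1 -> NoDup l2 -> covers l1 u -> covers l2 u -> lsum c l1 u = lsum c l2 u.
Proof.
  intros N1 N2 C1 C2. rewrite (lsum_filter_nonzero c l1), (lsum_filter_nonzero c l2).
  apply lsum_perm, NoDup_Permutation; try apply NoDup_filter; auto.
  intro k. rewrite !filter_In. unfold nonzerob.
  destruct (excluded_middle_informative (u k = zero));
    split; intros [_ Hb]; try discriminate; split; auto.
Qed.

Lemma lsum_evec_coord (K : Type) (G : AbGroup) (l : list K) (w : K -> G) : NoDup l -> forall j,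
  proj1_sig (lsum (@evec K G) l w) j = if excluded_middle_informative (In j l) then w j else zero.
Proof.
  induction 1 as [|k l Hk N IH]; intro j; simpl.
  - destruct (excluded_middle_informative False); tauto.
  - rewrite IH. destruct (dec j k) as [->|E].
    + destruct (excluded_middle_informative (In k l)); [contradiction|].
      destruct (excluded_middle_informative (k = k \/ In k l)); [apply add_0_r | tauto].
    + rewrite add0.
      destruct (excluded_middle_informative (In j l)), (excluded_middle_informative (k = j \/ In j l));
        intuition congruence.
Qed.

Lemma lsum_evec (K : Type) (G : AbGroup) (l : list K) (u : DSum K G) :
  NoDup l -> covers l (proj1_sig u) -> lsum (@evec K G) l (proj1_sig u) = u.
Proof.
  intros N C. apply sig_eq_pi, functional_extensionality; intro j.
  rewrite lsum_evec_coord by exact N.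
  destruct (excluded_middle_informative (In j l)) as [I|I]; auto.
  apply NNPP. intro E. apply I, C. auto.
Qed.

Definition supp_list (K : Type) (G : AbGroup) (u : DSum K G) : list K :=
  nodup (@dec K) (proj1_sig (constructive_indefinite_description _ (proj2_sig u))).

Lemma supp_list_NoDup (K : Type) (G : AbGroup) (u : DSum K G) : NoDup (supp_list u).
Proof. apply NoDup_nodup. Qed.

Lemma supp_list_covers (K : Type) (G : AbGroup) (u : DSum K G) : covers (supp_list u) (proj1_sig u).
Proof.
  intros k H. apply nodup_In.
  destruct (constructive_indefinite_description _ _); simpl; auto.
Qed.

Lemma covers_app (K : Type) (G : AbGroup) (l m : list K) (u : K -> G) :
  covers l u \/ covers m u -> covers (nodup (@dec K) (l ++ m)) u.
Proof. intros [C|C] k H; apply nodup_In, in_or_app; auto. Qed.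

Lemma covers_add (K : Type) (G : AbGroup) (l : list K) (u v : K -> G) :
  covers l u -> covers l v -> covers l (fun k => add (u k) (v k)).
Proof.
  intros Cu Cv k H. destruct (classic (u k = zero)) as [E|E]; auto.
  apply Cv. rewrite E, add0 in H. exact H.
Qed.

Definition corestr_DSum (X : AbGroup) (K : Type) (G : AbGroup) (f : hom X (Prod K G))
  (Hf : forall x, fin_supp (f x)) : hom X (DSum K G).
Proof.
  refine {| hfun := fun x => (exist _ (f x : K -> G) (Hf x) : DSum K G) |}.
  intros; apply sig_eq_pi; exact (hadd f _ _).
Defined.
Arguments corestr_DSum {X K G} f Hf.

Section DirectSumLocalization.
Variable L : Localization.
Variable K : Type.

Definition Lvec (k : K) : hom (L Zgrp) (L (F K)) := Lmap L (evec Zgrp k).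

Lemma Lvec_La k n : Lvec k (La L Zgrp n) = La L (F K) (evec Zgrp k n).
Proof. apply La_nat. Qed.

Definition Lsum_fun (u : DSum K (L Zgrp)) : L (F K) :=
  lsum Lvec (supp_list u) (proj1_sig u).

Lemma Lsum_fun_covers (u : DSum K (L Zgrp)) l : NoDup l -> covers l (proj1_sig u) ->
  Lsum_fun u = lsum Lvec l (proj1_sig u).
Proof. intros N C. apply lsum_covers; auto using supp_list_NoDup, supp_list_covers. Qed.

Definition Lsum : hom (DSum K (L Zgrp)) (L (F K)).
Proof.
  refine {| hfun := Lsum_fun |}.
  intros u v. set (m := nodup (@dec K) (supp_list u ++ supp_list v)).
  assert (Cu : covers m (proj1_sig u)) by (apply covers_app; left; apply supp_list_covers).
  assert (Cv : covers m (proj1_sig v)) by (apply covers_app; right; apply supp_list_covers).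
  rewrite (Lsum_fun_covers u (NoDup_nodup _ _) Cu), (Lsum_fun_covers v (NoDup_nodup _ _) Cv).
  rewrite (@Lsum_fun_covers (add u v) m (NoDup_nodup _ _) (covers_add Cu Cv)).
  apply lsum_add.
Defined.

(* [Lsum] is the inverse: [Lsum o phi] is the identity on the image of a, and
   [phi o Lsum] is the identity on each summand because [phi o Lvec k = e_k]. *)
Lemma dsum_localization_is_iso (phi : hom (L (F K)) (DSum K (L Zgrp))) :
  (forall x, phi (La L (F K) x) = dsum_map K (La L Zgrp) x) -> is_iso phi.
Proof.
  intro Hphi.
  assert (Hvec : forall k y, phi (Lvec k y) = evec (L Zgrp) k y).
  { intros k y. apply sig_eq_pi.
    refine (@local_hom_ext L Zgrp _ (is_local_Prod_LZ L K)
              (hcomp (Defs.incl K (L Zgrp)) (hcomp phi (Lvec k)))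
              (hcomp (Defs.incl K (L Zgrp)) (evec (L Zgrp) k)) _ y).
    intro n. simpl. rewrite Lvec_La, Hphi. simpl.
    apply functional_extensionality; intro j. destruct (dec j k); auto. apply hom0. }
  exists Lsum. split.
  - apply (@local_hom_ext L (F K) _ (La_LX_iso L _) (hcomp Lsum phi) (hid _)).
    intro x. simpl. rewrite Hphi.
    set (m := nodup (@dec K) (supp_list (dsum_map K (La L Zgrp) x) ++ supp_list x)).
    rewrite (@Lsum_fun_covers _ m) by (apply NoDup_nodup || (apply covers_app; left; apply supp_list_covers)).
    rewrite (lsum_ext _ (fun k => hcomp (La L (F K)) (evec Zgrp k)) _ _ (proj1_sig x))
      by (intro; apply Lvec_La).
    rewrite <- lsum_hom. f_equal. apply lsum_evec.
    + apply NoDup_nodup.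
    + apply covers_app; right; apply supp_list_covers.
  - intro u. change (phi (lsum Lvec (supp_list u) (proj1_sig u)) = u).
    rewrite lsum_hom, (lsum_ext _ (@evec K (L Zgrp)) _ _ (proj1_sig u)) by (intro; apply Hvec).
    apply lsum_evec; auto using supp_list_NoDup, supp_list_covers.
Qed.

Definition N_lift : hom (L (F K)) (Prod K (L Zgrp)) :=
  lift (is_local_Prod_LZ L K) (hcomp (Defs.incl K (L Zgrp)) (dsum_map K (La L Zgrp))).

Lemma N_lift_La x : N_lift (La L (F K) x) = Defs.incl K (L Zgrp) (dsum_map K (La L Zgrp) x).
Proof. exact (lift_La _ _ x). Qed.

Lemma N_L_N_lift w : N_L L (N_lift w).
Proof. exists N_lift. split; [exact N_lift_La | exists w; reflexivity]. Qed.

Lemma fin_supp_localization :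
  (forall y : Prod K (L Zgrp), N_L L y -> fin_supp y) ->
  is_L_localization L (dsum_map K (La L Zgrp)).
Proof.
  intro Hfin.
  assert (Hs : forall w, fin_supp (N_lift w)) by (intro w; apply Hfin, N_L_N_lift).
  assert (Hphi : forall x, corestr_DSum N_lift Hs (La L (F K) x) = dsum_map K (La L Zgrp) x).
  { intro x. apply sig_eq_pi. exact (N_lift_La x). }
  exists (corestr_DSum N_lift Hs). split; [apply dsum_localization_is_iso|]; exact Hphi.
Qed.

Lemma N_L_localization (y : Prod K (L Zgrp)) :
  is_L_localization L (dsum_map K (La L Zgrp)) ->
  N_L L y <-> exists u : DSum K (L Zgrp), proj1_sig u = y.
Proof.
  intros [phi [[psi [_ Hpsi]] Hphi]]. split.
  - intros [g [Hg [x <-]]]. exists (phi x). revert x.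
    apply (@local_hom_ext L (F K) _ (is_local_Prod_LZ L K) (hcomp (Defs.incl K (L Zgrp)) phi) g).
    intro x. simpl. rewrite Hg, Hphi. reflexivity.
  - intros [u <-]. exists (hcomp (Defs.incl K (L Zgrp)) phi). split.
    + intro x. simpl. rewrite Hphi. reflexivity.
    + exists (psi u). simpl. rewrite Hpsi. reflexivity.
Qed.

End DirectSumLocalization.

Lemma nat_not_all (s : list nat) : exists i, ~ In i s.
Proof.
  exists (S (list_max s)). intro I.
  pose proof (proj1 (Forall_forall _ s) (proj1 (list_max_le s _) (le_n _)) _ I) as H; cbv beta in H; lia.
Qed.

Fixpoint avoiding_list (K : Type) (next : list K -> K) (n : nat) : list K :=
  match n with 0 => [] | S n => next (avoiding_list next n) :: avoiding_list next n end.

Lemma avoiding_list_In (K : Type) (next : list K -> K) m n :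
  m < n -> In (next (avoiding_list next m)) (avoiding_list next n).
Proof.
  induction n; intro H; [lia|]. simpl. destruct (Nat.eq_dec m n); [subst; left; auto|].
  right; apply IHn; lia.
Qed.

Lemma injective_seq_of_infinite (K : Type) (P : K -> Prop) :
  (forall s : list K, exists k, P k /\ ~ In k s) ->
  exists kk : nat -> K, (forall n, P (kk n)) /\ (forall m n, kk m = kk n -> m = n).
Proof.
  intro H. destruct (choice _ H) as [next Hnext].
  exists (fun n => next (avoiding_list next n)). split.
  - intro n; apply Hnext.
  - intros m n E. destruct (Nat.lt_total m n) as [l|[l|l]]; auto; exfalso.
    + apply (proj2 (Hnext (avoiding_list next n))). rewrite <- E. apply avoiding_list_In; auto.
    + apply (proj2 (Hnext (avoiding_list next m))). rewrite E. apply avoiding_list_In; auto.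
Qed.

Lemma not_fin_supp_injective_seq (K : Type) (G : AbGroup) (y : K -> G) :
  ~ fin_supp y ->
  exists kk : nat -> K, (forall n, y (kk n) <> zero) /\ (forall m n, kk m = kk n -> m = n).
Proof.
  intro Hnf. apply (injective_seq_of_infinite (fun k => y k <> zero)). intro s. apply NNPP. intro Hn.
  apply Hnf. exists s. intros k Hk. apply NNPP. intro Hks. apply Hn. eauto.
Qed.

Lemma fin_supp_comp_inj (K : Type) (G : AbGroup) (kk : nat -> K)
  (Hinj : forall m n, kk m = kk n -> m = n) (u : K -> G) :
  fin_supp u -> fin_supp (fun i => u (kk i)).
Proof.
  intros [s Hs].
  exists (map (fun t => epsilon (inhabits 0) (fun i => kk i = t)) s).
  intros i Hi. apply in_map_iff. exists (kk i). split; auto.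
  apply Hinj, (epsilon_spec (inhabits 0) (fun j => kk j = kk i)). eauto.
Qed.

Definition dsum_restr (K : Type) (G : AbGroup) (kk : nat -> K)
  (Hinj : forall m n, kk m = kk n -> m = n) : hom (DSum K G) (DSum nat G).
Proof.
  refine {| hfun := fun u : DSum K G =>
     (exist _ (fun i => proj1_sig u (kk i)) (fin_supp_comp_inj kk Hinj (proj2_sig u)) : DSum nat G) |}.
  intros; apply sig_eq_pi; reflexivity.
Defined.

Definition prod_restr (K : Type) (G : AbGroup) (kk : nat -> K) : hom (Prod K G) (Prod nat G) :=
  {| hfun := fun (v : Prod K G) => (fun i => v (kk i)) : Prod nat G; hadd := fun _ _ => eq_refl |}.

(* The witness in N^omega0_L is the image of x under L of the restriction F_K -> F_omega0. *)
Lemma N_L_comp_inj (L : Localization) (K : Type) (kk : nat -> K)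
  (Hinj : forall m n, kk m = kk n -> m = n) (y : Prod K (L Zgrp)) :
  N_L L y -> N_L L (fun i => y (kk i)).
Proof.
  intros [g [Hg [x <-]]].
  pose (r := Lmap L (@dsum_restr K Zgrp kk Hinj)).
  assert (E : forall w, prod_restr (L Zgrp) kk (g w) = N_lift L nat (r w)).
  { apply (@local_hom_ext L (F K) _ (is_local_Prod_LZ L nat)
             (hcomp (prod_restr (L Zgrp) kk) g) (hcomp (N_lift L nat) r)).
    intro x'. change (prod_restr (L Zgrp) kk (g (La L (F K) x')) = N_lift L nat (r (La L (F K) x'))).
    unfold r. rewrite Hg, La_nat, N_lift_La. reflexivity. }
  change (N_L L (prod_restr (L Zgrp) kk (g x))). rewrite E. apply N_L_N_lift.
Qed.

Lemma fin_supp_localization_nat (L : Localization) :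
  is_L_localization L (dsum_map nat (La L Zgrp)) ->
  forall (K : Type) (y : Prod K (L Zgrp)), N_L L y -> fin_supp y.
Proof.
  intros Hloc K y Hy. apply NNPP. intro Hnf.
  destruct (not_fin_supp_injective_seq Hnf) as [kk [Hnz Hinj]].
  destruct (proj1 (N_L_localization _ Hloc) (N_L_comp_inj kk Hinj Hy)) as [[u [s Hs]] Eu].
  simpl in Eu. subst u.
  destruct (nat_not_all s) as [i Hi]. apply Hi, Hs, Hnz.
Qed.

Lemma supp_at_least_DSum_nat (G : AbGroup) (z : G) (n : nat) :
  z <> zero -> exists u : DSum nat G, @supp_at_least nat G (proj1_sig u) n.
Proof.
  intro Hz.
  pose (yf := fun i : nat => if Nat.ltb i n then z else zero).
  assert (Fy : fin_supp yf).
  { exists (seq 0 n). intros i Hi. apply in_seq. unfold yf in Hi.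
    destruct (Nat.ltb i n) eqn:E; [apply Nat.ltb_lt in E; lia | tauto]. }
  exists (exist _ yf Fy : DSum nat G), (seq 0 n).
  split; [apply seq_NoDup|]. split; [apply length_seq|].
  intros k Hk. apply in_seq in Hk. simpl. unfold yf.
  destruct (Nat.ltb k n) eqn:E; [exact Hz | apply Nat.ltb_ge in E; lia].
Qed.

Theorem lemma10 (L : Localization)
  (HLZ : exists z : L Zgrp, z <> zero) :
  (support_is_omega0 L <-> is_L_localization L (dsum_map nat (La L Zgrp))) /\
  (is_L_localization L (dsum_map nat (La L Zgrp)) <->
     forall K : Type, is_L_localization L (dsum_map K (La L Zgrp))).
Proof.
  split; split.
  - intros [Hfin _]. apply fin_supp_localization, Hfin.
  - intro Hloc. split; [exact (fin_supp_localization_nat Hloc)|].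
    intro n. destruct HLZ as [z Hz].
    destruct (@supp_at_least_DSum_nat _ z n Hz) as [u Hu].
    exists nat, (proj1_sig u). split; [|exact Hu].
    apply (N_L_localization _ Hloc). eauto.
  - intros Hloc K. apply fin_supp_localization, (fin_supp_localization_nat Hloc).
  - intro Hloc. apply Hloc.
Qed.
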